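(* Fix $k\in\mathbb N$, $\alpha\in\{0,1,\ldots,k\}$ and $N\in{}^*\mathbb N\setminus\mathbb N$, and let $M_2=\lfloor N-\sqrt N\rfloor+1$. For every $i\in{}^*\mathbb N\setminus\mathbb N$ with $i\le M_2$, we have $\frac{a_i}{b_i}\approx 1$, where $a_i=\binom{N-k}{i-\alpha}\big/\binom{N}{i}$ and $b_i=\left(\frac iN\right)^\alpha\left(1-\frac iN\right)^{k-\alpha}$.
   Context: Work in a nonstandard extension of the reals; $\lfloor\cdot\rfloor$ is the (extended) greatest integer function, and binomial coefficients with hypernatural arguments are defined by transfer. $x\approx y$ means $x-y$ is infinitesimal. *)

From Stdlib Require Import Reals Lra ZArith Arith.
Open Scope R_scope.

Fixpoint binom (n m : nat) : nat :=
  match n, m with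
  | _, O => 1%nat
  | O, S _ => 0%nat
  | S n', S m' => (binom n' m' + binom n' (S m'))%nat
  end.

Definition M2 (N : nat) : Z := (Int_part (INR N - sqrt (INR N)) + 1)%Z.

Definition a_seq (k alpha N i : nat) : R :=
  INR (binom (N - k) (i - alpha)) / INR (binom N i).

Definition b_seq (k alpha N i : nat) : R :=
  (INR i / INR N) ^ alpha * (1 - INR i / INR N) ^ (k - alpha).

From Stdlib Require Import Reals ZArith Arith Lra Lia Psatz.
Open Scope R_scope.

(* With [falling_ratio x j = (1 - 0/x)(1 - 1/x)...(1 - (j-1)/x)], the
   factorials in [a_i / b_i] collapse to
   [falling_ratio i alpha * falling_ratio (N-i) (k-alpha) / falling_ratio N k].
   The product inequality gives [1 - j^2/x <= falling_ratio x j <= 1], so each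
   factor is close to 1 once [x] is large compared to [k^2]; and both [i] and
   [N - i >= sqrt N - 1] are infinite. *)

Lemma binom_small n m : (n < m)%nat -> binom n m = 0%nat.
Proof.
  revert m; induction n as [|n IH]; intros m Hnm; destruct m as [|m]; simpl;
    try lia; auto.
  rewrite !IH; lia.
Qed.

Lemma INR_binom n m : (m <= n)%nat -> INR (binom n m) = C n m.
Proof.
  revert m; induction n as [|n IH]; intros m Hmn.
  - destruct m; [|lia]. unfold C; simpl. field.
  - destruct m as [|m].
    + unfold C. rewrite Nat.sub_0_r. change (INR (binom (S n) 0)) with 1.
      change (INR (fact 0)) with 1. field. apply INR_fact_neq_0.
    + simpl binom. rewrite plus_INR.
      destruct (Nat.eq_dec m n) as [->|Hne].
      * rewrite (binom_small n (S n)), IH by lia.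
        unfold C. rewrite !Nat.sub_diag. change (INR (fact 0)) with 1.
        change (INR 0) with 0. field. split; apply INR_fact_neq_0.
      * rewrite !IH by lia. apply pascal. lia.
Qed.

Fixpoint falling_ratio (x : R) (j : nat) : R :=
  match j with
  | O => 1
  | S j => falling_ratio x j * (1 - INR j / x)
  end.

Lemma fact_falling_ratio n j : (0 < n)%nat -> (j <= n)%nat ->
  INR (fact n) = falling_ratio (INR n) j * INR n ^ j * INR (fact (n - j)).
Proof.
  intros Hn. induction j as [|j IH]; intros Hjn.
  - simpl. rewrite Nat.sub_0_r. ring.
  - rewrite IH by lia.
    replace (n - j)%nat with (S (n - S j)) by lia.
    rewrite fact_simpl, mult_INR.
    replace (INR (S (n - S j))) with (INR n - INR j)
      by (rewrite <- minus_INR by lia; f_equal; lia).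
    simpl falling_ratio. simpl pow.
    assert (INR n <> 0) by (apply not_0_INR; lia).
    field. assumption.
Qed.

Lemma falling_ratio_bounds x j : 0 < x -> INR j <= x ->
  1 - INR j ^ 2 / x <= falling_ratio x j <= 1.
Proof.
  intros Hx. induction j as [|j IH]; intros Hjx.
  - simpl. lra.
  - rewrite S_INR in Hjx. pose proof (pos_INR j) as Hj0.
    destruct IH as [IHlo IHhi]; [lra|].
    simpl falling_ratio. rewrite S_INR.
    assert (Ht : INR j / x * x = INR j) by (field; lra).
    assert (Hinv : 1 / x * x = 1) by (field; lra).
    replace (INR j ^ 2 / x) with (INR j * (INR j / x)) in IHlo by (field; lra).
    replace ((INR j + 1) ^ 2 / x) with (INR j * (INR j / x) + 2 * (INR j / x) + 1 / x)
      by (field; lra).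
    set (t := INR j / x) in *. set (s := 1 / x) in *.
    assert (Ht0 : 0 <= t) by nra.
    assert (Ht1 : t < 1) by nra.
    assert (Hs : 0 < s) by nra.
    split; [|nra].
    destruct (Rle_dec 0 (1 - INR j * t)); nra.
Qed.

Definition large_threshold (k : nat) (d : R) : R := INR k ^ 2 / d + INR k + 1.

Lemma large_threshold_gt k d : 0 < d -> INR k + 1 <= large_threshold k d.
Proof.
  intros Hd. unfold large_threshold.
  assert (Hq : INR k ^ 2 / d * d = INR k ^ 2) by (field; lra).
  assert (0 <= INR k ^ 2 / d) by nra. lra.
Qed.

Lemma falling_ratio_near_1 d x k j : 0 < d -> large_threshold k d <= x ->
  (j <= k)%nat -> 1 - d <= falling_ratio x j <= 1.
Proof.
  intros Hd Hx Hjk.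
  pose proof (large_threshold_gt k d Hd) as Hk.
  pose proof (le_INR _ _ Hjk) as Hjk'. pose proof (pos_INR j).
  destruct (falling_ratio_bounds x j) as [Hlo Hhi]; [lra|lra|].
  split; [|exact Hhi].
  enough (INR j ^ 2 / x <= d) by lra.
  assert (Hq : INR k ^ 2 / d * d = INR k ^ 2) by (field; lra).
  assert (Hr : INR j ^ 2 / x * x = INR j ^ 2) by (field; lra).
  unfold large_threshold in Hx.
  set (q := INR k ^ 2 / d) in *. set (r := INR j ^ 2 / x) in *.
  assert (Hjk2 : INR j ^ 2 <= INR k ^ 2) by nra.
  assert (Hq0 : 0 <= q) by nra.
  assert (r * x <= d * x) by nra.
  nra.
Qed.

Lemma a_div_b_falling_ratio k alpha N i :
  (alpha <= k)%nat -> (alpha <= i)%nat -> (k - alpha <= N - i)%nat ->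
  (0 < i)%nat -> (i < N)%nat ->
  falling_ratio (INR N) k <> 0 -> falling_ratio (INR i) alpha <> 0 ->
  falling_ratio (INR (N - i)) (k - alpha) <> 0 ->
  a_seq k alpha N i / b_seq k alpha N i =
  falling_ratio (INR i) alpha * falling_ratio (INR (N - i)) (k - alpha)
    / falling_ratio (INR N) k.
Proof.
  intros Hak Hai Hkai Hi HiN HQN HQi HQNi.
  unfold a_seq, b_seq.
  rewrite !INR_binom by lia. unfold C.
  replace (N - k - (i - alpha))%nat with (N - i - (k - alpha))%nat by lia.
  rewrite (fact_falling_ratio N k), (fact_falling_ratio i alpha),
    (fact_falling_ratio (N - i) (k - alpha)) by lia.
  assert (HN : INR N <> 0) by (apply not_0_INR; lia).
  assert (HI : INR i <> 0) by (apply not_0_INR; lia).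
  assert (HNI : INR (N - i) <> 0) by (apply not_0_INR; lia).
  replace (1 - INR i / INR N) with (INR (N - i) / INR N)
    by (rewrite minus_INR by lia; field; exact HN).
  replace (INR N ^ k) with (INR N ^ alpha * INR N ^ (k - alpha))
    by (rewrite <- pow_add; f_equal; lia).
  unfold Rdiv. rewrite !Rpow_mult_distr, !pow_inv.
  field.
  repeat split; try apply pow_nonzero; auto; apply INR_fact_neq_0.
Qed.

Lemma Rabs_mul_div_sub1_le u v w d : 0 <= d <= 1 / 2 ->
  1 - d <= u <= 1 -> 1 - d <= v <= 1 -> 1 - d <= w <= 1 ->
  Rabs (u * v / w - 1) <= 2 * d.
Proof.
  intros Hd Hu Hv Hw.
  set (r := u * v / w).
  assert (Hrw : r * w = u * v) by (unfold r; field; lra).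
  apply Rabs_le; split; nra.
Qed.

Lemma le_M2_far_from_N N i T : 1 <= T -> (T + 1) ^ 2 <= INR N ->
  (Z.of_nat i <= M2 N)%Z -> (i < N)%nat /\ T <= INR (N - i).
Proof.
  intros HT HN HiM.
  assert (HsN : T + 1 <= sqrt (INR N)).
  { rewrite <- (sqrt_pow2 (T + 1)) by lra. apply sqrt_le_1_alt. exact HN. }
  apply IZR_le in HiM. rewrite <- INR_IZR_INZ in HiM. unfold M2 in HiM.
  rewrite plus_IZR in HiM.
  destruct (base_Int_part (INR N - sqrt (INR N))) as [Hfloor _].
  assert (HiN : (i < N)%nat) by (apply INR_lt; lra).
  split; [exact HiN|]. rewrite minus_INR by lia. lra.
Qed.

Lemma a_div_b_near_1 k alpha N i d : (alpha <= k)%nat -> 0 < d <= 1 / 2 ->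
  (i < N)%nat -> large_threshold k d <= INR i ->
  large_threshold k d <= INR (N - i) ->
  Rabs (a_seq k alpha N i / b_seq k alpha N i - 1) <= 2 * d.
Proof.
  intros Hak Hd HiN Hi HNi.
  pose proof (large_threshold_gt k d (proj1 Hd)) as Hk.
  pose proof (le_INR _ _ Hak). pose proof (pos_INR alpha).
  assert (HN : large_threshold k d <= INR N)
    by (pose proof (le_INR _ _ (Nat.le_sub_l N i)); lra).
  pose proof (falling_ratio_near_1 d (INR N) k k (proj1 Hd) HN (Nat.le_refl k))
    as HQN.
  pose proof (falling_ratio_near_1 d (INR i) k alpha (proj1 Hd) Hi Hak) as HQi.
  pose proof (falling_ratio_near_1 d (INR (N - i)) k (k - alpha) (proj1 Hd) HNi
    (Nat.le_sub_l k alpha)) as HQNi.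
  assert (Hai : (alpha <= i)%nat) by (apply INR_le; lra).
  assert (Hkai : (k - alpha <= N - i)%nat)
    by (apply INR_le; rewrite minus_INR by exact Hak; lra).
  assert (Hi0 : (0 < i)%nat) by (apply INR_lt; simpl; lra).
  rewrite a_div_b_falling_ratio by (auto; lra).
  apply Rabs_mul_div_sub1_le; auto. lra.
Qed.

Theorem mainTheorem9 (k alpha : nat) (Halpha : (alpha <= k)%nat) :
  forall eps : R, 0 < eps ->
  exists n0 : nat, forall N i : nat,
    (n0 <= N)%nat -> (n0 <= i)%nat -> (Z.of_nat i <= M2 N)%Z ->
    Rabs (a_seq k alpha N i / b_seq k alpha N i - 1) < eps.
Proof.
  intros eps Heps.
  set (d := Rmin (eps / 4) (1 / 2)).
  assert (Hd : 0 < d <= 1 / 2)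
    by (split; [apply Rmin_glb_lt|apply Rmin_r]; lra).
  assert (Hdeps : d <= eps / 4) by apply Rmin_l.
  set (T := large_threshold k d).
  assert (HT : INR k + 1 <= T) by apply large_threshold_gt, Hd.
  pose proof (pos_INR k).
  destruct (INR_unbounded ((T + 1) ^ 2)) as [n0 Hn0].
  exists n0. intros N i HN Hi HiM.
  apply le_INR in HN, Hi.
  destruct (le_M2_far_from_N N i T) as [HiN HNi]; [lra|lra|exact HiM|].
  assert (HTi : T <= INR i) by nra.
  apply Rle_lt_trans with (2 * d); [apply a_div_b_near_1; auto | lra].
Qed.
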